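(* Let $d$ be a positive integer, $0\le\kappa<d$ real, and $K>0$. Let $\tau,\eta>0$ be constants, and for a positive integer $N$ put $r=\eta(\log N)^{\frac{d\kappa}{d-\kappa}}$ (taken to be an integer) and let $\mathcal{P}_I$ be the set of primes in $I=[\tau(\log N)^{\frac{d}{d-\kappa}},2\tau(\log N)^{\frac{d}{d-\kappa}}]$. Let $S\subseteq[N]^d$ be nonempty and occupy at most $Kp^{\kappa}$ residue classes modulo $p$ for every $p\in\mathcal{P}_I$. There is a constant $C_1$ (depending only on $K$ and $\kappa$) such that if $\eta\ge C_1\tau^{\kappa}$, then there exists $c>0$ (independent of $N$, $S$ and $p$) such that for all sufficiently large $N$ and every prime $p\in\mathcal{P}_I$, there are at least $c|S|^{r+1}$ tuples $(x,L)\in S\times S^r$ that are good mod $p$.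
   Context: A tuple $(x,L)\in S\times S^r$, with $L=(\ell_1,\ldots,\ell_r)$, is called good mod $p$ if $x\equiv \ell_i \pmod p$ (coordinatewise) for some $i$, and bad otherwise. $S^r$ denotes the set of ordered $r$-tuples of elements of $S$. *)

From mathcomp Require Import all_boot.
From Stdlib Require Import Reals.
Set Implicit Arguments. Unset Strict Implicit. Unset Printing Implicit Defensive.

(* Points of [0..N]^d; membership in [N]^d = {1..N}^d is imposed by [in_box]. *)
Definition pt (d N : nat) := {ffun 'I_d -> 'I_N.+1}.

Definition in_box d N (S : {set pt d N}) : Prop :=
  forall x, x \in S -> forall i, (0 < x i)%N.

Definition residue d N (p : nat) (x : pt d N) : {ffun 'I_d -> nat} :=
  [ffun i => (x i : nat) %% p].

Definition num_classes d N (p : nat) (S : {set pt d N}) : nat :=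
  size (undup [seq residue p x | x <- enum S]).

Definition congr_mod d N (p : nat) (x y : pt d N) : bool :=
  [forall i, (x i : nat) == y i %[mod p]].

Definition good d N (p r : nat) (x : pt d N) (L : {ffun 'I_r -> pt d N}) : bool :=
  [exists i, congr_mod p x (L i)].

Definition good_count d N (p r : nat) (S : {set pt d N}) : nat :=
  #|[set xL : pt d N * {ffun 'I_r -> pt d N} |
      [&& xL.1 \in S, [forall i, xL.2 i \in S] & good p xL.1 xL.2]]|.

Definition r_of (eta : R) (d : nat) (kappa : R) (N : nat) : nat :=
  Z.to_nat (Int_part (eta * Rpower (ln (INR N)) (INR d * kappa / (INR d - kappa)))).

Definition in_PI (tau : R) (d : nat) (kappa : R) (N p : nat) : Prop :=
  prime p /\
  (tau * Rpower (ln (INR N)) (INR d / (INR d - kappa)) <= INR p)%R /\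
  (INR p <= 2 * tau * Rpower (ln (INR N)) (INR d / (INR d - kappa)))%R.

(* Let m <= r/2 be the number of residue classes of S.  By pigeonhole, the
   points of S whose class has fewer than |S|/(2m) elements make up at most
   half of S.  For any other x, with a >= |S|/(2m) >= |S|/r the size of its
   class, Bernoulli's inequality gives (|S| - a)^r <= |S|^r / 2, so at least
   half of the |S|^r tuples L in S^r meet the class of x.  Hence
   |S|^(r+1) <= 4 * #good.  The size hypothesis on S makes
   r = floor(eta (log N)^(d kappa/(d-kappa))) at least 2 K p^kappa >= 2m as
   soon as eta >= 4 K 2^kappa tau^kappa, for every N. *)
From mathcomp Require Import all_boot zify.
Set Implicit Arguments. Unset Strict Implicit. Unset Printing Implicit Defensive.

Lemma expn_bernoulli (a b k : nat) : b ^ k * (a + b + k * a) <= (a + b) ^ k.+1.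
Proof.
elim: k => [|k IH]; first by rewrite expn0 expn1 mul0n addn0 mul1n.
have step : b * (a + b + k.+1 * a) <= (a + b) * (a + b + k * a) by nia.
rewrite expnS [(a + b) ^ k.+2]expnS -mulnA mulnCA.
apply: leq_trans (leq_mul (leqnn _) IH).
by rewrite [X in _ <= X]mulnCA leq_mul2l step orbT.
Qed.

Lemma expn_subn_half (n a r : nat) :
  0 < n -> a <= n -> n <= r * a -> 2 * (n - a) ^ r <= n ^ r.
Proof.
move=> n_gt0 le_an le_n_ra; rewrite -(leq_pmul2l n_gt0).
have := expn_bernoulli a (n - a) r; rewrite subnKC // expnS => bern.
have : (n - a) ^ r * (2 * n) <= n * n ^ r.
  by apply: leq_trans bern; apply: leq_mul => //; lia.
set X := (n - a) ^ r; set Y := n ^ r; lia.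
Qed.

Lemma leq_mul_card_fibres (T : finType) (V : eqType) (f : T -> V) (k n : nat)
    (U : seq V) (A : {set T}) :
  {in A, forall x, f x \in U} ->
  (forall c, k * #|[set x in A | f x == c]| <= n) -> k * #|A| <= size U * n.
Proof.
elim: U A => [|c U IH] A fAU fibre_le.
  rewrite mul0n leqn0 muln_eq0 cards_eq0; apply/orP; right.
  by apply/eqP/setP => x; rewrite inE; apply/negbTE/negP => /fAU.
rewrite -(cardsID [set x in A | f x == c] A) mulnDr /= mulSn.
apply: leq_add.
  apply: leq_trans (fibre_le c); rewrite leq_mul2l subset_leq_card ?orbT //.
  by apply/subsetP => x; rewrite !inE => /andP[].
apply: IH => [x|c'].
  rewrite !inE; case xA: (x \in A) => //=; rewrite andbT => fxc.
  by move: (fAU x xA); rewrite inE (negbTE fxc).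
apply: leq_trans (fibre_le c'); rewrite leq_mul2l subset_leq_card ?orbT //.
by apply/subsetP => x; rewrite !inE => /andP[/andP[_ ->] ->].
Qed.

Lemma card_ffun_in (T : finType) (r : nat) (A : {set T}) :
  #|[set L : {ffun 'I_r -> T} | [forall i, L i \in A]]| = #|A| ^ r.
Proof.
by rewrite -[r in _ ^ r]card_ord -card_ffun_on; apply: eq_card => L; rewrite inE.
Qed.

Lemma congr_modE d N p (x y : pt d N) :
  congr_mod p x y = (residue p x == residue p y).
Proof.
apply/forallP/eqP => [h|h i].
  by apply/ffunP => i; rewrite !ffunE; apply/eqP/h.
by move/ffunP: h => /(_ i); rewrite !ffunE => ->.
Qed.

Section GoodCount.

Variables (d N p r : nat) (S : {set pt d N}).

Definition residue_class (x : pt d N) : {set pt d N} :=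
  [set y in S | residue p y == residue p x].

Definition tuples_in (A : {set pt d N}) : {set {ffun 'I_r -> pt d N}} :=
  [set L : {ffun 'I_r -> pt d N} | [forall i, L i \in A]].

Definition good_tuples (x : pt d N) : {set {ffun 'I_r -> pt d N}} :=
  tuples_in S :&: [set L | good p x L].

Lemma num_classes_gt0 : S != set0 -> 0 < num_classes p S.
Proof.
case/set0Pn=> x xS; rewrite /num_classes -has_predT.
by apply/hasP; exists (residue p x); rewrite // mem_undup map_f ?mem_enum.
Qed.

Lemma good_countE : good_count p r S = \sum_(x in S) #|good_tuples x|.
Proof.
rewrite /good_count -sum1_card; under [RHS]eq_bigr do rewrite -sum1_card.
by rewrite pair_big_dep; apply: eq_bigl => -[x L]; rewrite !inE.
Qed.

Lemma card_good_tuples x : x \in S ->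
  #|good_tuples x| = #|S| ^ r - (#|S| - #|residue_class x|) ^ r.
Proof.
move=> xS.
have good_tuplesE : good_tuples x = tuples_in S :\: tuples_in (S :\: residue_class x).
  apply/setP => L; rewrite !inE /good negb_forall andbC.
  case: (boolP [forall i, L i \in S]) => [/forallP LS | _]; rewrite ?andbT ?andbF //.
  apply: eq_existsb => i.
  by rewrite !inE LS /= andbT negbK congr_modE eq_sym.
have sub : tuples_in (S :\: residue_class x) \subset tuples_in S.
  by apply/subsetP => L; rewrite !inE => /forallP LS; apply/forallP => i;
     case/setDP: (LS i).
rewrite good_tuplesE cardsD (setIidPr sub) !card_ffun_in cardsD.
by rewrite (setIidPr _) //; apply/subsetP => y; rewrite inE => /andP[].
Qed.

Definition sparse k : {set pt d N} := [set x in S | k * #|residue_class x| < #|S|].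

Lemma card_sparse k : k * #|sparse k| <= num_classes p S * #|S|.
Proof.
apply: (@leq_mul_card_fibres _ _ (residue p)) => [x | c].
  by rewrite !inE => /andP[xS _]; rewrite mem_undup map_f ?mem_enum.
case: (set_0Vmem [set x in sparse k | residue p x == c]) => [-> | [x0]].
  by rewrite cards0 muln0.
rewrite !inE => /andP[/andP[_ sparse_x0] /eqP <-].
apply: leq_trans (ltnW sparse_x0); rewrite leq_mul2l subset_leq_card ?orbT //.
by apply/subsetP => y; rewrite !inE => /andP[/andP[-> _] ->].
Qed.

Lemma good_count_lower_bound : S != set0 -> 2 * num_classes p S <= r ->
  #|S| ^ r.+1 <= 4 * good_count p r S.
Proof.
move=> S_neq0 le_2m_r.
set n := #|S|; set m := num_classes p S.
have n_gt0 : 0 < n by rewrite card_gt0.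
have m_gt0 : 0 < m by apply: num_classes_gt0.
pose dense := S :\: sparse (2 * m).
have le_n_dense : n <= 2 * #|dense|.
  have := card_sparse (2 * m); rewrite -/n -/m => le_sparse.
  have := cardsID (sparse (2 * m)) S; rewrite (setIidPr _); last first.
    by apply/subsetP => x; rewrite inE => /andP[].
  rewrite -/n -/dense; nia.
have half_good x : x \in dense -> n ^ r <= 2 * #|good_tuples x|.
  rewrite !inE negb_and -leqNgt => /andP[dense_x xS]; rewrite xS /= in dense_x.
  have le_cls_n : #|residue_class x| <= n.
    by apply: subset_leq_card; apply/subsetP => y; rewrite inE => /andP[].
  have : n <= r * #|residue_class x|.
    by apply: leq_trans dense_x _; rewrite leq_mul2r le_2m_r orbT.
  move/(expn_subn_half n_gt0 le_cls_n); rewrite card_good_tuples //.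
  set P := (n - _) ^ r; set Q := n ^ r; lia.
have sum_dense : 2 * #|dense| * n ^ r <= 4 * \sum_(x in dense) #|good_tuples x|.
  rewrite -mulnA -sum_nat_const -[4]/(2 * 2) -mulnA leq_pmul2l // big_distrr.
  exact: leq_sum half_good.
rewrite expnS good_countE.
apply: leq_trans (leq_trans (leq_mul le_n_dense (leqnn _)) sum_dense) _.
rewrite leq_pmul2l // [X in _ <= X](big_setID dense) /= (setIidPr (subsetDl _ _)).
exact: leq_addr.
Qed.

End GoodCount.

From Stdlib Require Import Reals Lra.
Open Scope R_scope.

Lemma INR_expn (m n : nat) : INR (expn m n) = INR m ^ n.
Proof. by elim: n => [|n IH]; rewrite ?expn0 // expnS mult_INR IH. Qed.

Lemma leq_Int_part (n : nat) (x : R) : INR n <= x -> (n <= Z.to_nat (Int_part x))%nat.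
Proof.
move=> le_nx; have [_ lt_x] := base_Int_part x.
have : IZR (Z.of_nat n) < IZR (Int_part x + 1) by rewrite -INR_IZR_INZ plus_IZR; lra.
move/lt_IZR => lt_n; apply/leP; lia.
Qed.

Lemma Rpower_prime_le (tau : R) (d : nat) (kappa : R) (N p : nat) :
  0 <= kappa -> kappa < INR d -> 0 < tau -> in_PI tau d kappa N p ->
  Rpower (INR p) kappa <=
    Rpower 2 kappa * Rpower tau kappa * Rpower (ln (INR N)) (INR d * kappa / (INR d - kappa)).
Proof.
move=> kappa_ge0 kappa_lt_d tau_gt0 [p_prime [_ le_p]].
have p_gt0 : 0 < INR p by apply: (lt_INR 0); apply/ltP; exact: prime_gt0.
set X := Rpower (ln (INR N)) (INR d / (INR d - kappa)) in le_p.
have X_gt0 : 0 < X by apply: exp_pos.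
apply: Rle_trans (Rle_Rpower_l _ _ _ kappa_ge0 (conj p_gt0 le_p)) _.
rewrite -!Rpower_mult_distr; try nra.
rewrite /X Rpower_mult; right; congr (_ * Rpower _ _); field; lra.
Qed.

Lemma num_classes_le_r (d : nat) (kappa K tau eta : R) (N p : nat) (S : {set pt d N}) :
  0 <= kappa -> kappa < INR d -> 0 < K -> 0 < tau ->
  4 * K * Rpower 2 kappa * Rpower tau kappa <= eta ->
  INR (num_classes p S) <= K * Rpower (INR p) kappa -> in_PI tau d kappa N p ->
  (2 * num_classes p S <= r_of eta d kappa N)%nat.
Proof.
move=> kappa_ge0 kappa_lt_d K_gt0 tau_gt0 le_eta le_m PI_p.
apply: leq_Int_part; rewrite mult_INR /=.
have := Rpower_prime_le kappa_ge0 kappa_lt_d tau_gt0 PI_p.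
set T := Rpower (ln (INR N)) _ => le_pk.
have T_gt0 : 0 < T by apply: exp_pos.
have := Rmult_le_compat_l K _ _ (Rlt_le _ _ K_gt0) le_pk.
have := Rmult_le_compat_r T _ _ (Rlt_le _ _ T_gt0) le_eta.
have := pos_INR (num_classes p S).
lra.
Qed.

Close Scope R_scope.

Theorem lemma3p2 (d : nat) (kappa K : R) :
  (0 < d)%N -> (0 <= kappa)%R -> (kappa < INR d)%R -> (0 < K)%R ->
  exists C1 : R, forall tau eta : R, (0 < tau)%R -> (0 < eta)%R ->
    (C1 * Rpower tau kappa <= eta)%R ->
    exists c : R, (0 < c)%R /\
    exists N0 : nat, forall N : nat, (N0 <= N)%N ->
    forall S : {set pt d N}, S != set0 -> in_box S ->
      (forall p : nat, in_PI tau d kappa N p ->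
         (INR (num_classes p S) <= K * Rpower (INR p) kappa)%R) ->
      forall p : nat, in_PI tau d kappa N p ->
        (c * INR #|S| ^ (r_of eta d kappa N).+1 <=
           INR (good_count p (r_of eta d kappa N) S))%R.
Proof.
move=> _ kappa_ge0 kappa_lt_d K_gt0.
exists (4 * K * Rpower 2 kappa)%R => tau eta tau_gt0 _ le_eta.
exists (/ 4)%R; split; first lra.
exists 0 => N _ S S_neq0 _ classes_le p PI_p.
have := good_count_lower_bound S_neq0
  (num_classes_le_r kappa_ge0 kappa_lt_d K_gt0 tau_gt0 le_eta (classes_le p PI_p) PI_p).
move/leP/le_INR; rewrite mult_INR INR_expn /=; lra.
Qed.
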